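(* Let $A$ be a finite-dimensional real algebra in which every subalgebra generated by a single element is associative, and let $(p^{[n]}(t))_{n\in\mathbb N}$, $p^{[n]}(t)=\sum_{k=0}^\infty a_k^{[n]}t^k$, be any sequence of real power series with $\sum_{k=0}^\infty|a_k^{[n]}|<\infty$ for each $n$ and $\lim_{n\to\infty}\sup\{|a_k^{[n]}|:k\ge1\}=0$. Put $p_0^{[n]}(t)=p^{[n]}(t)-a_0^{[n]}$. If $x\in A$ satisfies $\lim_{n\to\infty}x^n=0$, then $\lim_{n\to\infty}p_0^{[n]}(x)=0$, where $p_0^{[n]}(x)=\sum_{k\ge1}a_k^{[n]}x^k$.
   Context: $A$ carries the Euclidean topology of a finite-dimensional real vector space; powers $x^k$ are well defined by the one-generator associativity. The sequence $(p^{[n]})$ is arbitrary (not necessarily iterates of one series). *)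

From HB Require Import structures.
From mathcomp Require Import all_boot all_order all_algebra.
From mathcomp Require Import all_classical all_reals all_analysis.
Set Implicit Arguments. Unset Strict Implicit. Unset Printing Implicit Defensive.
Import Order.TTheory GRing.Theory Num.Theory.
Import numFieldNormedType.Exports.
Local Open Scope classical_set_scope.
Local Open Scope ring_scope.

(* A finite-dimensional real algebra is modelled as the real vector space
   'rV[R]_d (with its canonical normed = Euclidean topology) together with a
   bilinear, not necessarily associative, multiplication [mul]. *)
Definition bilinear_mul (R : realType) (d : nat)
  (mul : 'rV[R]_d -> 'rV[R]_d -> 'rV[R]_d) : Prop :=
  (forall (c : R) u v w, mul (c *: u + v) w = c *: mul u w + mul v w) /\
  (forall (c : R) u v w, mul w (c *: u + v) = c *: mul w u + mul w v).

Definition is_subalgebra (R : realType) (d : nat)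
  (mul : 'rV[R]_d -> 'rV[R]_d -> 'rV[R]_d) (S : set 'rV[R]_d) : Prop :=
  S 0 /\ (forall (c : R) u v, S u -> S v -> S (c *: u + v)) /\
  (forall u v, S u -> S v -> S (mul u v)).

Definition gen_subalg (R : realType) (d : nat)
  (mul : 'rV[R]_d -> 'rV[R]_d -> 'rV[R]_d) (x : 'rV[R]_d) : set 'rV[R]_d :=
  [set y | forall S, is_subalgebra mul S -> S x -> S y].

Definition power_associative (R : realType) (d : nat)
  (mul : 'rV[R]_d -> 'rV[R]_d -> 'rV[R]_d) : Prop :=
  forall x a b c, gen_subalg mul x a -> gen_subalg mul x b -> gen_subalg mul x c ->
    mul (mul a b) c = mul a (mul b c).

(* Powers x^k for k >= 1: x^1 = x, x^(k+1) = x * x^k.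
   (The value at k = 0 is a junk value equal to x; it is never used in
   a meaningful way.) *)
Definition xpow (R : realType) (d : nat)
  (mul : 'rV[R]_d -> 'rV[R]_d -> 'rV[R]_d) (x : 'rV[R]_d) (k : nat) : 'rV[R]_d :=
  iter k.-1 (mul x) x.

Definition p0_partial (R : realType) (d : nat)
  (mul : 'rV[R]_d -> 'rV[R]_d -> 'rV[R]_d) (a : nat -> nat -> R) (n : nat)
  (x : 'rV[R]_d) : nat -> 'rV[R]_d :=
  series (fun k => a n k.+1 *: xpow mul x k.+1).

Definition p0 (R : realType) (d : nat)
  (mul : 'rV[R]_d -> 'rV[R]_d -> 'rV[R]_d) (a : nat -> nat -> R) (n : nat)
  (x : 'rV[R]_d) : 'rV[R]_d :=
  lim (p0_partial mul a n x @ \oo).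

From HB Require Import structures.
From mathcomp Require Import all_boot all_order all_algebra.
From mathcomp Require Import all_classical all_reals all_analysis.
Set Implicit Arguments.
Unset Strict Implicit.
Unset Printing Implicit Defensive.
Import Order.TTheory GRing.Theory Num.Theory.
Import numFieldNormedType.Exports.
Local Open Scope classical_set_scope.
Local Open Scope ring_scope.

(* Power associativity gives x^(i+j) = x^i x^j, and in finite dimension the
   bilinear product satisfies |u v| <= M |u| |v|.  As x^n -> 0, some N has
   M |x^N| <= 1/2, so |x^(N+k)| <= |x^k| / 2 and the norms |x^k| are summable,
   with sum B say.  Hence |p_0^[n](x)| <= B sup_(k >= 1) |a_k^[n]| -> 0. *)

(* The library equips matrices with a normed-module structure and, separately,
   a complete one; restating the latter makes their join available. *)
HB.instance Definition _ (R : realType) (m n : nat) :=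
  Complete.on 'M[R]_(m, n).

Section BilinearMul.
Variables (R : realType) (d : nat) (mul : 'rV[R]_d -> 'rV[R]_d -> 'rV[R]_d).
Hypothesis mul_bilinear : bilinear_mul mul.

Lemma bilin_mul0l w : mul 0 w = 0.
Proof.
have := mul_bilinear.1 1 0 0 w; rewrite !scale1r addr0.
by rewrite -{1}[mul 0 w]addr0 => /addrI.
Qed.

Lemma bilin_mul0r w : mul w 0 = 0.
Proof.
have := mul_bilinear.2 1 0 0 w; rewrite !scale1r addr0.
by rewrite -{1}[mul w 0]addr0 => /addrI.
Qed.

Lemma bilin_mulZl c u w : mul (c *: u) w = c *: mul u w.
Proof. by have := mul_bilinear.1 c u 0 w; rewrite !addr0 bilin_mul0l addr0. Qed.

Lemma bilin_mulZr c u w : mul w (c *: u) = c *: mul w u.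
Proof. by have := mul_bilinear.2 c u 0 w; rewrite !addr0 bilin_mul0r addr0. Qed.

Lemma bilin_mul_suml I (r : seq I) (P : pred I) F w :
  mul (\sum_(i <- r | P i) F i) w = \sum_(i <- r | P i) mul (F i) w.
Proof.
elim/big_rec2: _ => [|i _ v _ <-]; first exact: bilin_mul0l.
by have := mul_bilinear.1 1 (F i) v w; rewrite !scale1r.
Qed.

Lemma bilin_mul_sumr I (r : seq I) (P : pred I) F w :
  mul w (\sum_(i <- r | P i) F i) = \sum_(i <- r | P i) mul w (F i).
Proof.
elim/big_rec2: _ => [|i _ v _ <-]; first exact: bilin_mul0r.
by have := mul_bilinear.2 1 (F i) v w; rewrite !scale1r.
Qed.

Lemma ler_coord_norm (u : 'rV[R]_d) i : `|u 0 i| <= `|u|.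
Proof.
rewrite [leRHS]/Num.norm /= mx_normrE.
exact: (le_bigmax _ (fun ij => `|u ij.1 ij.2|) (0, i)).
Qed.

Lemma bilin_mul_bounded :
  exists2 M : R, 0 <= M & forall u v, `|mul u v| <= M * (`|u| * `|v|).
Proof.
exists (\sum_(i < d) \sum_(j < d) `|mul (delta_mx 0 i) (delta_mx 0 j)|).
  by apply: sumr_ge0 => i _; apply: sumr_ge0.
move=> u v; rewrite {1}(row_sum_delta u) {1}(row_sum_delta v) bilin_mul_suml.
rewrite mulr_suml; apply: le_trans (ler_norm_sum _ _ _) _.
apply: ler_sum => i _; rewrite bilin_mulZl bilin_mul_sumr normrZ mulr_suml.
apply: le_trans (ler_wpM2l (normr_ge0 _) (ler_norm_sum _ _ _)) _.
rewrite mulr_sumr; apply: ler_sum => j _; rewrite bilin_mulZr normrZ.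
by rewrite mulrA [leRHS]mulrC ler_wpM2r // ler_pM ?ler_coord_norm.
Qed.

End BilinearMul.

Lemma sum_le_of_halving (R : numFieldType) (r : nat -> R) (m : nat) (C : R) :
  0 <= C -> (forall k, r k <= C) -> (forall k, r (m.+1 + k)%N <= r k / 2) ->
  forall K, \sum_(k < K) r k <= m.+1%:R * C *+ 2.
Proof.
move=> C0 r_le_C r_half.
have head K : (K <= m.+1)%N -> \sum_(k < K) r k <= m.+1%:R * C.
  move=> Km; apply: le_trans (_ : \sum_(k < K) C <= _); first exact: ler_sum.
  by rewrite sumr_const card_ord -[C *+ K]mulr_natl ler_wpM2r // ler_nat.
elim/ltn_ind => K IH; have [Km|mK] := leqP K m.+1.
  by rewrite (le_trans (head K Km)) // mulr2n lerDl mulr_ge0.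
rewrite -(subnKC (ltnW mK)) big_split_ord /= mulr2n lerD ?head //.
apply: le_trans (_ : \sum_(k < K - m.+1) r k / 2 <= _); first exact: ler_sum.
rewrite -mulr_suml ler_pdivrMr // mulr_natr; apply: IH.
by rewrite ltn_subrL (leq_ltn_trans (leq0n _) mK).
Qed.

Section Powers.
Variables (R : realType) (d : nat) (mul : 'rV[R]_d -> 'rV[R]_d -> 'rV[R]_d).
Variable x : 'rV[R]_d.
Hypothesis mul_pa : power_associative mul.

Lemma xpow_gen_subalg k : gen_subalg mul x (xpow mul x k).
Proof.
move=> S [_ [_ S_mul]] Sx; rewrite /xpow.
by elim: k.-1 => //= n Sxn; apply: S_mul.
Qed.

Lemma xpowSS_add i j :
  xpow mul x (i + j)%N.+2 = mul (xpow mul x i.+1) (xpow mul x j.+1).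
Proof.
have xpowSS k : xpow mul x k.+2 = mul x (xpow mul x k.+1) by [].
elim: i => [|i IH] //.
rewrite addSn xpowSS IH xpowSS.
by rewrite (mul_pa (xpow_gen_subalg 1) (xpow_gen_subalg _) (xpow_gen_subalg _)).
Qed.

Hypothesis mul_bilinear : bilinear_mul mul.

Lemma xpow_normed_series_bounded :
  xpow mul x @ \oo --> (0 : 'rV[R]_d) ->
  exists B, forall K, \sum_(k < K) `|xpow mul x k.+1| <= B.
Proof.
move=> x_cvg0.
have [M M0 mul_le] := bilin_mul_bounded mul_bilinear.
have norm_x0 : (fun k => `|xpow mul x k|) @ \oo --> (0 : R).
  by rewrite -(@normr0 _ 'rV[R]_d); apply: cvg_norm.
have /cvg_seq_bounded/bounded_fun_has_ubound[C C_ub] := cvgP _ norm_x0.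
have : \forall k \near \oo, M * `|xpow mul x k| < 2^-1.
  by apply: (cvgr_lt 0) => //; rewrite -(mulr0 M); apply: cvgMl_tmp.
move=> [N _ /(_ N.+1 (leqnSn N)) /ltW small].
exists (N.+1%:R * C *+ 2).
apply: (@sum_le_of_halving _ (fun k => `|xpow mul x k.+1|)) => [|k|k].
- exact: le_trans (normr_ge0 _) (C_ub _ (imageT _ 0%N)).
- exact: C_ub (imageT _ _).
by rewrite /= addSn xpowSS_add (le_trans (mul_le _ _)) // mulrA mulrC ler_wpM2l.
Qed.

End Powers.

Lemma ler_sup_tail (R : realType) (u : R ^nat) k :
  cvgn (series (fun k => `|u k|)) ->
  `|u k.+1| <= sup [set `|u k| | k in [set k : nat | (1 <= k)%N]].
Proof.
move=> /cvg_series_bounded/bounded_fun_has_ubound[M M_ub].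
apply: sup_upper_bound; last by exists k.+1.
split; first by exists `|u 1%N|; exists 1%N.
by exists M => _ [j _ <-]; apply: M_ub; exists j.
Qed.

Lemma cvg_series_normed_le (R : realType) (V : completeNormedModType R)
    (u : V ^nat) (B : R) :
  (forall N, [normed series u] N <= B) ->
  cvgn (series u) /\ `|limn (series u)| <= B.
Proof.
move=> le_B.
have normed_cvg_u : cvgn [normed series u].
  apply: nondecreasing_is_cvgn; last by exists B => _ [N _ <-].
  by apply: nondecreasing_series => k _ _; apply: normr_ge0.
split; first exact: normed_cvg.
apply: le_trans (lim_series_norm normed_cvg_u) _.
by apply: limr_le => //; near=> N; apply: le_B.
Unshelve. all: by end_near.
Qed.

Theorem lemma1 (R : realType) (d : nat)
  (mul : 'rV[R]_d -> 'rV[R]_d -> 'rV[R]_d)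
  (a : nat -> nat -> R) (x : 'rV[R]_d) :
  bilinear_mul mul ->
  power_associative mul ->
  (forall n, cvg (series (fun k => `|a n k|) @ \oo)) ->
  ((fun n => sup [set `|a n k| | k in [set k : nat | (1 <= k)%N]]) @ \oo --> (0 : R)) ->
  (xpow mul x @ \oo --> (0 : 'rV[R]_d)) ->
  (forall n, cvg (p0_partial mul a n x @ \oo)) /\
  (p0 mul a ^~ x @ \oo --> (0 : 'rV[R]_d)).
Proof.
move=> mul_bilinear mul_pa a_summable sup_a0 x_cvg0.
set s := fun n => sup _ in sup_a0.
have [B xpow_le_B] := xpow_normed_series_bounded mul_pa mul_bilinear x_cvg0.
have p0_le n : cvgn (p0_partial mul a n x) /\ `|p0 mul a n x| <= s n * B.
  rewrite /p0 /p0_partial; apply: cvg_series_normed_le => N.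
  rewrite /series /= seriesEord.
  have s_ge0 : 0 <= s n.
    exact: le_trans (normr_ge0 _) (ler_sup_tail 0 (a_summable n)).
  apply: le_trans (_ : \sum_(k < N) s n * `|xpow mul x k.+1| <= _).
    by apply: ler_sum => k _; rewrite normrZ ler_wpM2r // ler_sup_tail.
  by rewrite -mulr_sumr ler_wpM2l.
split=> [n|]; first by case: (p0_le n).
apply/norm_cvg0P; apply: (@squeeze_cvgr _ _ _ _ (fun=> 0) (fun n => s n * B)).
- by near=> n; rewrite normr_ge0; case: (p0_le n).
- exact: cvg_cst.
- by rewrite -(mul0r B); apply: cvgMr_tmp.
Unshelve. all: by end_near.
Qed.
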